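(* Let $(\mathfrak g,[\,,\,]_{\mathfrak g})$ be a Lie algebra. There is a compatible PostLie algebra structure on $\mathfrak g$ if and only if there exist a $\mathfrak g$-Lie algebra $(\mathfrak k,\pi)$ and an invertible $\mathcal O$-operator $r:\mathfrak k\to\mathfrak g$ of weight $1$.
   Context: A PostLie algebra is a vector space $L$ with bilinear $\circ,[\,,\,]$ satisfying, for all $x,y,z$: $[x,y]=-[y,x]$; $[[x,y],z]+[[z,x],y]+[[y,z],x]=0$; $z\circ(y\circ x)-y\circ(z\circ x)+(y\circ z)\circ x-(z\circ y)\circ x+[y,z]\circ x=0$; $z\circ[x,y]-[z\circ x,y]-[x,z\circ y]=0$. A compatible PostLie algebra structure on $\mathfrak g$ is a PostLie algebra structure $(\circ,[\,,\,])$ on the underlying vector space of $\mathfrak g$ with $x\circ y-y\circ x+[x,y]=[x,y]_{\mathfrak g}$ for all $x,y$. A $\mathfrak g$-Lie algebra $(\mathfrak k,\pi)$ is a Lie algebra $\mathfrak k$ with a Lie algebra homomorphism $\pi:\mathfrak g\to\mathrm{Der}(\mathfrak k)$; an $\mathcal O$-operator of weight $\lambda$ is a linear $r:\mathfrak k\to\mathfrak g$ with $[r(x),r(y)]_{\mathfrak g}=r(\pi(r(x))y-\pi(r(y))x+\lambda[x,y]_{\mathfrak k})$. *)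

From HB Require Import structures.
From mathcomp Require Import all_boot all_order all_algebra.
Set Implicit Arguments. Unset Strict Implicit. Unset Printing Implicit Defensive.
Import GRing.Theory.
Local Open Scope ring_scope.

Section Defs.
Variable F : fieldType.

Definition bilinear_map (U V W : lmodType F) (f : U -> V -> W) : Prop :=
  (forall (a : F) (x y : U) (z : V), f (a *: x + y) z = a *: f x z + f y z) /\
  (forall (a : F) (x : U) (y z : V), f x (a *: y + z) = a *: f x y + f x z).

Definition linear_map (U V : lmodType F) (f : U -> V) : Prop :=
  forall (a : F) (x y : U), f (a *: x + y) = a *: f x + f y.

Definition is_lie_algebra (V : lmodType F) (br : V -> V -> V) : Prop :=
  [/\ bilinear_map br,
      (forall x y, br x y = - br y x) &
      (forall x y z, br (br x y) z + br (br z x) y + br (br y z) x = 0)].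

Definition is_postlie (V : lmodType F) (circ br : V -> V -> V) : Prop :=
  [/\ bilinear_map circ, bilinear_map br,
      is_lie_algebra br,
      (forall x y z, circ z (circ y x) - circ y (circ z x) + circ (circ y z) x
                      - circ (circ z y) x + circ (br y z) x = 0) &
      (forall x y z, circ z (br x y) - br (circ z x) y - br x (circ z y) = 0)].

Definition compatible_postlie (V : lmodType F) (brg : V -> V -> V)
    (circ br : V -> V -> V) : Prop :=
  is_postlie circ br /\ (forall x y, circ x y - circ y x + br x y = brg x y).

Definition is_derivation (K : lmodType F) (brk : K -> K -> K) (D : K -> K) : Prop :=
  linear_map D /\ (forall x y, D (brk x y) = brk (D x) y + brk x (D y)).

(* (K, brk, pi) is a g-Lie algebra, where (V, brg) = g: K is a Lie algebra and
   pi : g -> Der(K) is a Lie algebra homomorphism (Der(K) with commutator bracket) *)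
Definition is_g_lie_algebra (V : lmodType F) (brg : V -> V -> V)
    (K : lmodType F) (brk : K -> K -> K) (pi : V -> K -> K) : Prop :=
  [/\ is_lie_algebra brk,
      (forall x, is_derivation brk (pi x)),
      (forall (a : F) x y k, pi (a *: x + y) k = a *: pi x k + pi y k) &
      (forall x y k, pi (brg x y) k = pi x (pi y k) - pi y (pi x k))].

Definition is_O_operator (V : lmodType F) (brg : V -> V -> V)
    (K : lmodType F) (brk : K -> K -> K) (pi : V -> K -> K) (lam : F)
    (r : K -> V) : Prop :=
  linear_map r /\
  (forall x y, brg (r x) (r y) = r (pi (r x) y - pi (r y) x + lam *: brk x y)).

End Defs.

(* Both directions rest on one algebraic identity (postlie_assoc_identity):
   once x o y - y o x + [x,y] = [x,y]_g holds, the first PostLie axiom says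
   exactly that the left action L(x) = x o _ is a representation of g, while
   the second PostLie axiom says exactly that each L(x) is a derivation of
   [,].
   - (=>) Take k = g with the bracket [,] and pi = L; then the identity of g
     is an invertible O-operator of weight 1 (postlie_g_lie_algebra,
     compatible_id_O_operator).
   - (<=) Transport the Lie bracket and the action of k to g along the linear
     bijection r: x o y = r (pi x (r^-1 y)), [x,y] = r [r^-1 x, r^-1 y]_k.
     Transport preserves Lie algebras and derivations, and the O-operator
     equation is the compatibility condition (O_operator_postlie). *)
From HB Require Import structures.
From mathcomp Require Import all_boot all_order all_algebra.
Import GRing.Theory.
Local Open Scope ring_scope.

Set Implicit Arguments. Unset Strict Implicit.

Section LinearMaps.
Variables (F : fieldType) (U W : lmodType F) (f : U -> W).
Hypothesis f_linear : linear_map f.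

Lemma linear_map0 : f 0 = 0.
Proof.
have := f_linear 1 0 0; rewrite !scale1r addr0 => e.
by rewrite -[f 0](addrK (f 0)) -e subrr.
Qed.

Lemma linear_mapD x y : f (x + y) = f x + f y.
Proof. by have := f_linear 1 x y; rewrite !scale1r. Qed.

Lemma linear_mapN x : f (- x) = - f x.
Proof. by have := f_linear (-1) x 0; rewrite !addr0 linear_map0 addr0 !scaleN1r. Qed.

Lemma linear_mapB x y : f (x - y) = f x - f y.
Proof. by rewrite linear_mapD linear_mapN. Qed.

Lemma linear_mapZ a x : f (a *: x) = a *: f x.
Proof. by have := f_linear a x 0; rewrite !addr0 linear_map0 addr0. Qed.

End LinearMaps.

Section CompatibleProduct.
Variables (F : fieldType) (V : lmodType F) (brg circ br : V -> V -> V).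

Definition left_linear := forall k, linear_map (circ^~ k).

Definition compatible := forall x y, circ x y - circ y x + br x y = brg x y.

(* Under compatibility, the first PostLie axiom at (x, y, z) equals the
   defect of L(x) = x o _ from being a representation of (V, brg). *)
Lemma postlie_assoc_identity : left_linear -> compatible -> forall x y z,
  circ z (circ y x) - circ y (circ z x) + circ (circ y z) x
    - circ (circ z y) x + circ (br y z) x
  = circ (brg y z) x - (circ y (circ z x) - circ z (circ y x)).
Proof.
move=> circL compat x y z.
rewrite -compat !(linear_mapD (circL x)) (linear_mapN (circL x)) opprB.
by rewrite [RHS]addrC !addrA.
Qed.

Lemma postlie_derivation_identity x y z :
  circ z (br x y) - br (circ z x) y - br x (circ z y) = 0 <->
  circ z (br x y) = br (circ z x) y + br x (circ z y).
Proof. by rewrite -addrA -opprD; split=> [/subr0_eq | ->]; rewrite ?subrr. Qed.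

End CompatibleProduct.

Section PostLieToOOperator.
Variables (F : fieldType) (V : lmodType F) (brg circ br : V -> V -> V).
Hypothesis postlie : compatible_postlie brg circ br.

Lemma postlie_g_lie_algebra : is_g_lie_algebra brg br circ.
Proof.
case: postlie => -[[circL circR] _ brLie assoc deriv] compat.
have circ_left_linear : left_linear circ by move=> k a u v; apply: circL.
split=> // [z | y z x].
- split; first by move=> a u v; apply: circR.
  by move=> x y; apply/(postlie_derivation_identity circ br x y z).1/deriv.
- apply/eqP; rewrite -subr_eq0 -(postlie_assoc_identity circ_left_linear compat).
  exact/eqP/assoc.
Qed.

Lemma compatible_id_O_operator : is_O_operator brg br circ 1 id.
Proof.
split=> // x y; rewrite scale1r.
by case: postlie => _ compat; rewrite compat.
Qed.

End PostLieToOOperator.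

Section Transport.
Variables (F : fieldType) (K V : lmodType F) (r : K -> V) (g : V -> K).
Hypotheses (r_linear : linear_map r) (rK : cancel r g) (gK : cancel g r).

Definition transport_bracket (brk : K -> K -> K) (a b : V) : V :=
  r (brk (g a) (g b)).
Definition transport_action (pi : V -> K -> K) (a b : V) : V := r (pi a (g b)).

Lemma inverse_linear : linear_map g.
Proof. by move=> a x y; rewrite -{1}(gK x) -{1}(gK y) -r_linear rK. Qed.

Lemma transport_bilinear (brk : K -> K -> K) :
  bilinear_map brk -> bilinear_map (transport_bracket brk).
Proof.
move=> [brkL brkR]; split=> a x y z;
by rewrite /transport_bracket inverse_linear (brkL, brkR) r_linear.
Qed.

Lemma transport_lie_algebra (brk : K -> K -> K) :
  is_lie_algebra brk -> is_lie_algebra (transport_bracket brk).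
Proof.
move=> [brk_bil brk_anti brk_jacobi]; split.
- exact: transport_bilinear.
- by move=> x y; rewrite /transport_bracket brk_anti (linear_mapN r_linear).
- move=> x y z; rewrite /transport_bracket !rK -!(linear_mapD r_linear).
  by rewrite brk_jacobi (linear_map0 r_linear).
Qed.

Lemma transport_derivation (brk : K -> K -> K) (D : K -> K) :
  is_derivation brk D -> is_derivation (transport_bracket brk) (r \o D \o g).
Proof.
move=> [DL Dder]; split=> [a x y | x y] /=.
- by rewrite inverse_linear DL r_linear.
- by rewrite /transport_bracket !rK Dder (linear_mapD r_linear).
Qed.

Lemma O_operator_compatible (brg : V -> V -> V) (brk : K -> K -> K)
    (pi : V -> K -> K) (lam : F) :
  is_O_operator brg brk pi lam r ->
  forall x y, transport_action pi x y - transport_action pi y x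
                + lam *: transport_bracket brk x y = brg x y.
Proof.
move=> [_ Oeq] x y; rewrite -(gK x) -(gK y) Oeq /transport_action.
by rewrite /transport_bracket !rK (linear_mapD r_linear) (linear_mapB r_linear)
  (linear_mapZ r_linear).
Qed.

End Transport.

Section OOperatorToPostLie.
Variables (F : fieldType) (V K : lmodType F) (brg : V -> V -> V).
Variables (brk : K -> K -> K) (pi : V -> K -> K) (r : K -> V) (g : V -> K).
Hypotheses (gLie : is_g_lie_algebra brg brk pi)
           (Oop : is_O_operator brg brk pi 1 r)
           (rK : cancel r g) (gK : cancel g r).

Lemma O_operator_postlie :
  compatible_postlie brg (transport_action r g pi) (transport_bracket r g brk).
Proof.
have r_linear : linear_map r := Oop.1.
case: gLie => brkLie pi_der pi_linear pi_hom.
set circ := transport_action r g pi; set br := transport_bracket r g brk.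
have compat : compatible brg circ br.
  by move=> x y; rewrite -[br x y]scale1r; apply: O_operator_compatible.
have circL : left_linear circ.
  by move=> k a u v; rewrite /circ /transport_action pi_linear r_linear.
split=> //; split.
- split=> [a x y z | a x y z]; first exact: circL.
  exact: (transport_derivation r_linear rK gK (pi_der x)).1.
- by case: (transport_lie_algebra r_linear rK gK brkLie).
- exact: transport_lie_algebra.
- move=> x y z; rewrite (postlie_assoc_identity circL compat).
  by rewrite /circ /transport_action !rK pi_hom (linear_mapB r_linear) subrr.
- move=> x y z; apply/(postlie_derivation_identity circ br x y z).2.
  exact: (transport_derivation r_linear rK gK (pi_der z)).2.
Qed.

End OOperatorToPostLie.

Theorem corollary5p5 (F : fieldType) (V : lmodType F) (brg : V -> V -> V)
    (hg : is_lie_algebra brg) :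
  (exists circ br : V -> V -> V, compatible_postlie brg circ br) <->
  (exists (K : lmodType F) (brk : K -> K -> K) (pi : V -> K -> K) (r : K -> V),
      [/\ is_g_lie_algebra brg brk pi, is_O_operator brg brk pi 1 r & bijective r]).
Proof.
split=> [[circ [br postlie]] | [K [brk [pi [r [gLie Oop [g rK gK]]]]]]].
- exists V, br, circ, id; split.
  + exact: postlie_g_lie_algebra.
  + exact: compatible_id_O_operator.
  + by exists id.
- exists (transport_action r g pi), (transport_bracket r g brk).
  exact: O_operator_postlie.
Qed.
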